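(* For any multi-index $I\in\mathbb{N}^6$, any smooth $\mathbb{R}$-valued function $f_1$ and any smooth $\mathbb{C}^2$-valued function $f_2$ on $\mathbb{R}^{1+2}$, we have $$\big|\big[\widehat\Gamma^I(f_1f_2)\big]_-\big|\lesssim\sum_{|I_1|+|I_2|\le|I|}\big|\Gamma^{I_1}f_1\big|\,\big|\big[\widehat\Gamma^{I_2}f_2\big]_-\big|.$$
   Context: On $\mathbb{R}^{1+2}$ with coordinates $(t,x)=(x_0,x_1,x_2)$, $r=|x|$, $\omega_a=x_a/r$ ($a=1,2$). Vector fields: $\Omega=x_1\partial_2-x_2\partial_1$, $L_a=t\partial_a+x_a\partial_t$; modified fields $\widehat\Omega=\Omega-\tfrac12\gamma^1\gamma^2$, $\widehat L_a=L_a-\tfrac12\gamma^0\gamma^a$. Set $(\Gamma_1,\dots,\Gamma_6)=(\partial_t,\partial_1,\partial_2,\Omega,L_1,L_2)$, $(\widehat\Gamma_1,\dots,\widehat\Gamma_6)=(\partial_t,\partial_1,\partial_2,\widehat\Omega,\widehat L_1,\widehat L_2)$, and for $I=(i_1,\dots,i_6)\in\mathbb{N}^6$, $\Gamma^I=\prod_{k=1}^6\Gamma_k^{i_k}$, $\widehat\Gamma^I=\prod_{k=1}^6\widehat\Gamma_k^{i_k}$, $|I|=\sum i_k$. For $\phi:\mathbb{R}^{1+2}\to\mathbb{C}^2$, $[\phi]_-=\phi-\omega_a\gamma^0\gamma^a\phi$ (summation over $a=1,2$). Dirac matrices: $\gamma^0=\begin{pmatrix}1&0\\0&-1\end{pmatrix}$,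 $\gamma^1=\begin{pmatrix}0&1\\-1&0\end{pmatrix}$, $\gamma^2=\begin{pmatrix}0&-i\\-i&0\end{pmatrix}$. The implicit constant depends only on $|I|$. *)

From Stdlib Require Import Reals List.
From Coquelicot Require Import Coquelicot.
Import ListNotations.
Open Scope R_scope.

Definition fn := R -> R -> R -> R.
Definition spinor := (C * C)%type.
Definition sf := R -> R -> R -> spinor.

Inductive dir := Dt | D1 | D2.

Definition line (d : dir) (g : fn) (t x1 x2 : R) : R -> R :=
  match d with
  | Dt => fun s => g s x1 x2
  | D1 => fun s => g t s x2
  | D2 => fun s => g t x1 s
  end.

Definition base (d : dir) (t x1 x2 : R) : R :=
  match d with Dt => t | D1 => x1 | D2 => x2 end.

Definition pd (d : dir) (g : fn) : fn :=
  fun t x1 x2 => Derive (line d g t x1 x2) (base d t x1 x2).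

Fixpoint pdl (l : list dir) (g : fn) : fn :=
  match l with
  | [] => g
  | d :: l' => pd d (pdl l' g)
  end.

Definition smooth (g : fn) : Prop :=
  forall l : list dir,
    (forall t x1 x2,
       continuous (fun p : R * R * R => let '(a, b, c) := p in pdl l g a b c)
                  (t, x1, x2)) /\
    (forall d t x1 x2, ex_derive (line d (pdl l g) t x1 x2) (base d t x1 x2)).

Definition comp1r (F : sf) : fn := fun t x1 x2 => fst (fst (F t x1 x2)).
Definition comp1i (F : sf) : fn := fun t x1 x2 => snd (fst (F t x1 x2)).
Definition comp2r (F : sf) : fn := fun t x1 x2 => fst (snd (F t x1 x2)).
Definition comp2i (F : sf) : fn := fun t x1 x2 => snd (snd (F t x1 x2)).

Definition smoothS (F : sf) : Prop :=
  smooth (comp1r F) /\ smooth (comp1i F) /\ smooth (comp2r F) /\ smooth (comp2i F).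

(* the vector fields Gamma_1..Gamma_6 = d_t, d_1, d_2, Omega, L_1, L_2 *)
Inductive vf := Vt | V1 | V2 | VOm | VL1 | VL2.

Definition Gam (k : vf) (g : fn) : fn :=
  match k with
  | Vt => pd Dt g
  | V1 => pd D1 g
  | V2 => pd D2 g
  | VOm => fun t x1 x2 => x1 * pd D2 g t x1 x2 - x2 * pd D1 g t x1 x2
  | VL1 => fun t x1 x2 => t * pd D1 g t x1 x2 + x1 * pd Dt g t x1 x2
  | VL2 => fun t x1 x2 => t * pd D2 g t x1 x2 + x2 * pd Dt g t x1 x2
  end.

Definition liftS (X : fn -> fn) (F : sf) : sf :=
  fun t x1 x2 =>
    ((X (comp1r F) t x1 x2, X (comp1i F) t x1 x2),
     (X (comp2r F) t x1 x2, X (comp2i F) t x1 x2)).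

Definition spadd (u v : spinor) : spinor :=
  (Cplus (fst u) (fst v), Cplus (snd u) (snd v)).
Definition spscale (z : C) (u : spinor) : spinor :=
  (Cmult z (fst u), Cmult z (snd u)).
Definition spsub (u v : spinor) : spinor := spadd u (spscale (RtoC (-1)) v).
Definition spnorm (u : spinor) : R :=
  sqrt (Cmod (fst u) ^ 2 + Cmod (snd u) ^ 2).

(* Dirac matrices: gamma0 = [[1,0],[0,-1]], gamma1 = [[0,1],[-1,0]],
   gamma2 = [[0,-i],[-i,0]] acting on column vectors (a,b). *)
Definition gamma0 (u : spinor) : spinor := (fst u, Copp (snd u)).
Definition gamma1 (u : spinor) : spinor := (snd u, Copp (fst u)).
Definition gamma2 (u : spinor) : spinor :=
  (Cmult (Copp Ci) (snd u), Cmult (Copp Ci) (fst u)).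

Definition GamH (k : vf) (F : sf) : sf :=
  match k with
  | VOm => fun t x1 x2 =>
      spsub (liftS (Gam VOm) F t x1 x2)
            (spscale (RtoC (1/2)) (gamma1 (gamma2 (F t x1 x2))))
  | VL1 => fun t x1 x2 =>
      spsub (liftS (Gam VL1) F t x1 x2)
            (spscale (RtoC (1/2)) (gamma0 (gamma1 (F t x1 x2))))
  | VL2 => fun t x1 x2 =>
      spsub (liftS (Gam VL2) F t x1 x2)
            (spscale (RtoC (1/2)) (gamma0 (gamma2 (F t x1 x2))))
  | _ => liftS (Gam k) F
  end.

Definition mi := (nat * nat * nat * nat * nat * nat)%type.

Definition mi_size (I : mi) : nat :=
  let '(i1, i2, i3, i4, i5, i6) := I in (i1 + i2 + i3 + i4 + i5 + i6)%nat.

Definition GammaI (I : mi) (g : fn) : fn :=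
  let '(i1, i2, i3, i4, i5, i6) := I in
  Nat.iter i1 (Gam Vt) (Nat.iter i2 (Gam V1) (Nat.iter i3 (Gam V2)
   (Nat.iter i4 (Gam VOm) (Nat.iter i5 (Gam VL1) (Nat.iter i6 (Gam VL2) g))))).

Definition GammaHI (I : mi) (F : sf) : sf :=
  let '(i1, i2, i3, i4, i5, i6) := I in
  Nat.iter i1 (GamH Vt) (Nat.iter i2 (GamH V1) (Nat.iter i3 (GamH V2)
   (Nat.iter i4 (GamH VOm) (Nat.iter i5 (GamH VL1) (Nat.iter i6 (GamH VL2) F))))).

Definition mulRS (f1 : fn) (F : sf) : sf :=
  fun t x1 x2 => spscale (RtoC (f1 t x1 x2)) (F t x1 x2).

(* [phi]_- = phi - omega_a gamma^0 gamma^a phi at the point x = (x1,x2), x <> 0 *)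
Definition minusP (x1 x2 : R) (u : spinor) : spinor :=
  let r := sqrt (x1 ^ 2 + x2 ^ 2) in
  spsub (spsub u (spscale (RtoC (x1 / r)) (gamma0 (gamma1 u))))
        (spscale (RtoC (x2 / r)) (gamma0 (gamma2 u))).

Definition mis_upto (n : nat) : list mi :=
  let s := seq 0 (S n) in
  filter (fun I => Nat.leb (mi_size I) n)
   (flat_map (fun a => flat_map (fun b => flat_map (fun c =>
     flat_map (fun d => flat_map (fun e => map (fun f => (a, b, c, d, e, f)) s)
     s) s) s) s) s).

Definition pairs_upto (n : nat) : list (mi * mi) :=
  filter (fun p => Nat.leb (mi_size (fst p) + mi_size (snd p)) n)
         (list_prod (mis_upto n) (mis_upto n)).

Definition sumR (l : list R) : R := fold_right Rplus 0 l.

(* The spin correction in each modified field is a constant matrix, so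
   hat-Gamma_k obeys the Leibniz rule
   hat-Gamma_k (f F) = (Gamma_k f) F + f (hat-Gamma_k F).  Iterating along the
   word hat-Gamma^I expands hat-Gamma^I (f F) into 2^|I| terms
   Gamma^I1 f . hat-Gamma^I2 F, one for each splitting of the word into two
   complementary subwords; as the word is ordered by the index of the vector
   fields, so are its subwords, which are therefore again of the form
   Gamma^I1, hat-Gamma^I2 with |I1| + |I2| = |I|.  Since [.]_- is linear, the
   triangle inequality gives the estimate with constant 2^|I|. *)

From Stdlib Require Import Reals List Lia Lra FunctionalExtensionality.
From Coquelicot Require Import Coquelicot.
Import ListNotations.
Open Scope R_scope.

Lemma fn_ext (f g : fn) : (forall t x1 x2, f t x1 x2 = g t x1 x2) -> f = g.
Proof. intros H; do 3 (apply functional_extensionality; intro); apply H. Qed.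

Lemma sf_ext (F G : sf) : (forall t x1 x2, F t x1 x2 = G t x1 x2) -> F = G.
Proof. intros H; do 3 (apply functional_extensionality; intro); apply H. Qed.

Definition ex_pd (g : fn) : Prop :=
  forall d t x1 x2, ex_derive (line d g t x1 x2) (base d t x1 x2).

Lemma line_base d g t x1 x2 : line d g t x1 x2 (base d t x1 x2) = g t x1 x2.
Proof. destruct d; reflexivity. Qed.

Lemma line_lift2 (op : R -> R -> R) d f g t x1 x2 :
  line d (fun t x1 x2 => op (f t x1 x2) (g t x1 x2)) t x1 x2
  = fun s => op (line d f t x1 x2 s) (line d g t x1 x2 s).
Proof. destruct d; reflexivity. Qed.

Lemma ex_pd_plus f g : ex_pd f -> ex_pd g ->
  ex_pd (fun t x1 x2 => f t x1 x2 + g t x1 x2).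
Proof.
  intros Hf Hg d t x1 x2; rewrite (line_lift2 Rplus).
  exact (ex_derive_plus _ _ _ (Hf _ _ _ _) (Hg _ _ _ _)).
Qed.

Lemma ex_pd_mult f g : ex_pd f -> ex_pd g ->
  ex_pd (fun t x1 x2 => f t x1 x2 * g t x1 x2).
Proof. intros Hf Hg d t x1 x2; rewrite (line_lift2 Rmult); apply ex_derive_mult; auto. Qed.

Lemma ex_pd_const c : ex_pd (fun _ _ _ => c).
Proof. intros d t x1 x2; destruct d; apply ex_derive_const. Qed.

Lemma pd_plus d f g t x1 x2 : ex_pd f -> ex_pd g ->
  pd d (fun t x1 x2 => f t x1 x2 + g t x1 x2) t x1 x2 = pd d f t x1 x2 + pd d g t x1 x2.
Proof. intros Hf Hg; unfold pd; rewrite (line_lift2 Rplus); apply Derive_plus; auto. Qed.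

Lemma pd_mult d f g t x1 x2 : ex_pd f -> ex_pd g ->
  pd d (fun t x1 x2 => f t x1 x2 * g t x1 x2) t x1 x2
  = pd d f t x1 x2 * g t x1 x2 + f t x1 x2 * pd d g t x1 x2.
Proof.
  intros Hf Hg; unfold pd; rewrite (line_lift2 Rmult), Derive_mult by auto.
  now rewrite !line_base.
Qed.

Lemma pd_const d c t x1 x2 : pd d (fun _ _ _ => c) t x1 x2 = 0.
Proof. destruct d; apply (Derive_const c). Qed.

Fixpoint ex_pd_upto (n : nat) (g : fn) : Prop :=
  match n with
  | O => True
  | S m => ex_pd g /\ forall d, ex_pd_upto m (pd d g)
  end.

Definition ex_pd_inf (g : fn) : Prop := forall n, ex_pd_upto n g.

Lemma ex_pd_upto_S n g : ex_pd_upto (S n) g -> ex_pd_upto n g.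
Proof.
  revert g; induction n as [|n IH]; intros g [Hg Hpd]; [exact I|].
  split; [exact Hg|]. intros d; apply IH, Hpd.
Qed.

Lemma ex_pd_inf_ex_pd g : ex_pd_inf g -> ex_pd g.
Proof. intros H; exact (proj1 (H 1%nat)). Qed.

Lemma ex_pd_inf_pd d g : ex_pd_inf g -> ex_pd_inf (pd d g).
Proof. intros H n; exact (proj2 (H (S n)) d). Qed.

Lemma ex_pd_inf_const c : ex_pd_inf (fun _ _ _ => c).
Proof.
  intros n; revert c; induction n as [|n IH]; intros c; [exact I|].
  split; [apply ex_pd_const|]. intros d.
  replace (pd d (fun _ _ _ => c)) with (fun _ _ _ : R => 0); [apply IH|].
  apply fn_ext; intros; symmetry; apply pd_const.
Qed.

Lemma ex_pd_upto_plus n f g : ex_pd_upto n f -> ex_pd_upto n g ->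
  ex_pd_upto n (fun t x1 x2 => f t x1 x2 + g t x1 x2).
Proof.
  revert f g; induction n as [|n IH]; intros f g Hf Hg; [exact I|].
  destruct Hf as [Hf Hfd], Hg as [Hg Hgd]. split; [now apply ex_pd_plus|].
  intros d.
  replace (pd d (fun t x1 x2 => f t x1 x2 + g t x1 x2))
    with (fun t x1 x2 => pd d f t x1 x2 + pd d g t x1 x2); [now apply IH|].
  apply fn_ext; intros; symmetry; now apply pd_plus.
Qed.

Lemma ex_pd_upto_mult n f g : ex_pd_upto n f -> ex_pd_upto n g ->
  ex_pd_upto n (fun t x1 x2 => f t x1 x2 * g t x1 x2).
Proof.
  revert f g; induction n as [|n IH]; intros f g Hf Hg; [exact I|].
  pose proof (ex_pd_upto_S n f Hf) as Hf'. pose proof (ex_pd_upto_S n g Hg) as Hg'.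
  destruct Hf as [Hf Hfd], Hg as [Hg Hgd]. split; [now apply ex_pd_mult|].
  intros d.
  replace (pd d (fun t x1 x2 => f t x1 x2 * g t x1 x2))
    with (fun t x1 x2 => pd d f t x1 x2 * g t x1 x2 + f t x1 x2 * pd d g t x1 x2).
  - apply ex_pd_upto_plus; apply IH; auto.
  - apply fn_ext; intros; symmetry; now apply pd_mult.
Qed.

Lemma ex_pd_inf_plus f g : ex_pd_inf f -> ex_pd_inf g ->
  ex_pd_inf (fun t x1 x2 => f t x1 x2 + g t x1 x2).
Proof. intros Hf Hg n; apply ex_pd_upto_plus; auto. Qed.

Lemma ex_pd_inf_mult f g : ex_pd_inf f -> ex_pd_inf g ->
  ex_pd_inf (fun t x1 x2 => f t x1 x2 * g t x1 x2).
Proof. intros Hf Hg n; apply ex_pd_upto_mult; auto. Qed.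

Lemma ex_pd_inf_opp f : ex_pd_inf f -> ex_pd_inf (fun t x1 x2 => - f t x1 x2).
Proof.
  intros Hf. replace (fun t x1 x2 => - f t x1 x2) with (fun t x1 x2 => -1 * f t x1 x2).
  - apply ex_pd_inf_mult; [apply ex_pd_inf_const | exact Hf].
  - apply fn_ext; intros; ring.
Qed.

Lemma ex_pd_inf_minus f g : ex_pd_inf f -> ex_pd_inf g ->
  ex_pd_inf (fun t x1 x2 => f t x1 x2 - g t x1 x2).
Proof. intros Hf Hg; apply ex_pd_inf_plus; [exact Hf | now apply ex_pd_inf_opp]. Qed.

Lemma ex_pd_inf_coord d : ex_pd_inf (fun t x1 x2 => base d t x1 x2).
Proof.
  intros [|n]; [exact I|]. split.
  - intros d' t x1 x2; destruct d, d'; cbn;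
      first [apply (ex_derive_id (K := R_AbsRing)) | apply ex_derive_const].
  - intros d'.
    assert (Hc : exists c, pd d' (fun t x1 x2 => base d t x1 x2) = fun _ _ _ => c).
    { destruct d, d'; unfold pd; cbn;
        first [ exists 1; apply fn_ext; intros; apply Derive_id
              | exists 0; apply fn_ext; intros; apply Derive_const ]. }
    destruct Hc as [c ->]. apply ex_pd_inf_const.
Qed.

Lemma smooth_ex_pd_inf f : smooth f -> ex_pd_inf f.
Proof.
  intros Hs n. change f with (pdl [] f). generalize (@nil dir).
  induction n as [|n IH]; intros l; [exact I|].
  split; [exact (proj2 (Hs l)) | intros d; exact (IH (d :: l))].
Qed.

Ltac ex_pd_inf_closure :=
  repeat first
    [ assumption
    | apply ex_pd_inf_const
    | exact (ex_pd_inf_coord Dt) | exact (ex_pd_inf_coord D1) | exact (ex_pd_inf_coord D2)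
    | apply ex_pd_inf_plus | apply ex_pd_inf_minus | apply ex_pd_inf_mult
    | apply ex_pd_inf_opp | apply ex_pd_inf_pd ].

Lemma Gam_plus k f g t x1 x2 : ex_pd f -> ex_pd g ->
  Gam k (fun t x1 x2 => f t x1 x2 + g t x1 x2) t x1 x2 = Gam k f t x1 x2 + Gam k g t x1 x2.
Proof. intros Hf Hg; destruct k; cbn [Gam]; rewrite ?pd_plus by auto; ring. Qed.

Lemma Gam_mult k f g t x1 x2 : ex_pd f -> ex_pd g ->
  Gam k (fun t x1 x2 => f t x1 x2 * g t x1 x2) t x1 x2
  = Gam k f t x1 x2 * g t x1 x2 + f t x1 x2 * Gam k g t x1 x2.
Proof. intros Hf Hg; destruct k; cbn [Gam]; rewrite ?pd_mult by auto; ring. Qed.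

Lemma Gam_const k c t x1 x2 : Gam k (fun _ _ _ => c) t x1 x2 = 0.
Proof. destruct k; cbn [Gam]; rewrite ?pd_const; ring. Qed.

Lemma ex_pd_inf_Gam k g : ex_pd_inf g -> ex_pd_inf (Gam k g).
Proof. intros Hg; destruct k; unfold Gam; ex_pd_inf_closure. Qed.

Definition sfadd (F G : sf) : sf := fun t x1 x2 => spadd (F t x1 x2) (G t x1 x2).
Definition szero : spinor := (RtoC 0, RtoC 0).
Fixpoint sfsum (l : list sf) : sf :=
  match l with
  | [] => fun _ _ _ => szero
  | F :: l' => sfadd F (sfsum l')
  end.

(* [cbn], not [cbv]: unfolding [Cmult] before reducing the projections
   duplicates its arguments and makes the terms explode. *)
Ltac spinor_ring :=
  unfold comp1r, comp1i, comp2r, comp2i;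
  apply injective_projections; apply injective_projections;
  cbn [szero spsub spadd spscale gamma0 gamma1 gamma2 RtoC Cplus Cmult Copp Ci fst snd];
  ring.

Definition ex_pd_infS (F : sf) : Prop :=
  ex_pd_inf (comp1r F) /\ ex_pd_inf (comp1i F) /\ ex_pd_inf (comp2r F) /\ ex_pd_inf (comp2i F).

Lemma smoothS_ex_pd_infS F : smoothS F -> ex_pd_infS F.
Proof. intros (H1 & H2 & H3 & H4); repeat split; now apply smooth_ex_pd_inf. Qed.

Lemma comps_mulRS f F :
  comp1r (mulRS f F) = (fun t x1 x2 => f t x1 x2 * comp1r F t x1 x2) /\
  comp1i (mulRS f F) = (fun t x1 x2 => f t x1 x2 * comp1i F t x1 x2) /\
  comp2r (mulRS f F) = (fun t x1 x2 => f t x1 x2 * comp2r F t x1 x2) /\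
  comp2i (mulRS f F) = (fun t x1 x2 => f t x1 x2 * comp2i F t x1 x2).
Proof.
  repeat split; apply fn_ext; intros; unfold comp1r, comp1i, comp2r, comp2i, mulRS;
    cbn [spscale RtoC Cmult fst snd]; ring.
Qed.

Lemma ex_pd_infS_sfadd F G : ex_pd_infS F -> ex_pd_infS G -> ex_pd_infS (sfadd F G).
Proof.
  intros (F1 & F2 & F3 & F4) (G1 & G2 & G3 & G4).
  repeat split; apply ex_pd_inf_plus; assumption.
Qed.

Lemma ex_pd_infS_sfsum l : List.Forall ex_pd_infS l -> ex_pd_infS (sfsum l).
Proof.
  induction 1 as [|F l HF _ IH]; cbn [sfsum].
  - repeat split; exact (ex_pd_inf_const 0).
  - now apply ex_pd_infS_sfadd.
Qed.

Lemma ex_pd_infS_mulRS f F : ex_pd_inf f -> ex_pd_infS F -> ex_pd_infS (mulRS f F).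
Proof.
  intros Hf (F1 & F2 & F3 & F4); unfold ex_pd_infS.
  destruct (comps_mulRS f F) as (-> & -> & -> & ->).
  repeat split; now apply ex_pd_inf_mult.
Qed.

Lemma ex_pd_infS_GamH k F : ex_pd_infS F -> ex_pd_infS (GamH k F).
Proof.
  intros (F1 & F2 & F3 & F4).
  destruct k; repeat split; unfold comp1r, comp1i, comp2r, comp2i in *;
    cbn [GamH liftS Gam spsub spadd spscale gamma0 gamma1 gamma2 RtoC Cplus Cmult Copp Ci
         fst snd];
    ex_pd_inf_closure.
Qed.

Lemma liftS_Gam_sfadd k F G t x1 x2 : ex_pd_infS F -> ex_pd_infS G ->
  liftS (Gam k) (sfadd F G) t x1 x2
  = spadd (liftS (Gam k) F t x1 x2) (liftS (Gam k) G t x1 x2).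
Proof.
  intros (F1 & F2 & F3 & F4) (G1 & G2 & G3 & G4).
  apply injective_projections; apply injective_projections; cbn;
    apply Gam_plus; now apply ex_pd_inf_ex_pd.
Qed.

Lemma liftS_Gam_mulRS k f F t x1 x2 : ex_pd_inf f -> ex_pd_infS F ->
  liftS (Gam k) (mulRS f F) t x1 x2
  = spadd (spscale (RtoC (Gam k f t x1 x2)) (F t x1 x2))
          (spscale (RtoC (f t x1 x2)) (liftS (Gam k) F t x1 x2)).
Proof.
  intros Hf (F1 & F2 & F3 & F4). unfold liftS.
  destruct (comps_mulRS f F) as (-> & -> & -> & ->).
  rewrite !Gam_mult by now apply ex_pd_inf_ex_pd.
  spinor_ring.
Qed.

Lemma liftS_Gam_const k u t x1 x2 : liftS (Gam k) (fun _ _ _ => u) t x1 x2 = szero.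
Proof. unfold liftS, comp1r, comp1i, comp2r, comp2i; rewrite !Gam_const; reflexivity. Qed.

Definition spin_part (k : vf) (u : spinor) : spinor :=
  match k with
  | VOm => spscale (RtoC (1/2)) (gamma1 (gamma2 u))
  | VL1 => spscale (RtoC (1/2)) (gamma0 (gamma1 u))
  | VL2 => spscale (RtoC (1/2)) (gamma0 (gamma2 u))
  | _ => szero
  end.

Lemma GamH_spin_part k F t x1 x2 :
  GamH k F t x1 x2 = spsub (liftS (Gam k) F t x1 x2) (spin_part k (F t x1 x2)).
Proof.
  destruct k; try reflexivity; cbn [GamH spin_part]; spinor_ring.
Qed.

Lemma spin_part_spadd k u v :
  spin_part k (spadd u v) = spadd (spin_part k u) (spin_part k v).
Proof. destruct k; unfold spin_part; spinor_ring. Qed.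

Lemma spin_part_spscale k z u :
  spin_part k (spscale z u) = spscale z (spin_part k u).
Proof. destruct k; unfold spin_part; spinor_ring. Qed.

Lemma GamH_sfadd k F G : ex_pd_infS F -> ex_pd_infS G ->
  GamH k (sfadd F G) = sfadd (GamH k F) (GamH k G).
Proof.
  intros HF HG; apply sf_ext; intros t x1 x2; unfold sfadd at 2.
  rewrite !GamH_spin_part, liftS_Gam_sfadd by assumption.
  unfold sfadd; rewrite spin_part_spadd; spinor_ring.
Qed.

Lemma GamH_mulRS k f F : ex_pd_inf f -> ex_pd_infS F ->
  GamH k (mulRS f F) = sfadd (mulRS (Gam k f) F) (mulRS f (GamH k F)).
Proof.
  intros Hf HF; apply sf_ext; intros t x1 x2; unfold sfadd, mulRS at 2 3.
  rewrite !GamH_spin_part, liftS_Gam_mulRS by assumption.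
  unfold mulRS; rewrite spin_part_spscale; spinor_ring.
Qed.

Lemma GamH_sfsum k l : List.Forall ex_pd_infS l ->
  GamH k (sfsum l) = sfsum (map (GamH k) l).
Proof.
  induction 1 as [|F l HF Hl IH]; cbn [sfsum map].
  - apply sf_ext; intros t x1 x2.
    rewrite GamH_spin_part, liftS_Gam_const; destruct k; unfold spin_part; spinor_ring.
  - rewrite GamH_sfadd, IH by (try apply ex_pd_infS_sfsum; assumption). reflexivity.
Qed.

(** * Words of vector fields *)

Fixpoint Gam_word (w : list vf) (f : fn) : fn :=
  match w with
  | [] => f
  | k :: w' => Gam k (Gam_word w' f)
  end.

Fixpoint GamH_word (w : list vf) (F : sf) : sf :=
  match w with
  | [] => F
  | k :: w' => GamH k (GamH_word w' F)
  end.

Fixpoint unshuffles (w : list vf) : list (list vf * list vf) :=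
  match w with
  | [] => [([], [])]
  | k :: w' => map (fun p => (k :: fst p, snd p)) (unshuffles w')
               ++ map (fun p => (fst p, k :: snd p)) (unshuffles w')
  end.

Lemma ex_pd_inf_Gam_word w f : ex_pd_inf f -> ex_pd_inf (Gam_word w f).
Proof. intros Hf; induction w; cbn [Gam_word]; auto using ex_pd_inf_Gam. Qed.

Lemma ex_pd_infS_GamH_word w F : ex_pd_infS F -> ex_pd_infS (GamH_word w F).
Proof. intros HF; induction w; cbn [GamH_word]; auto using ex_pd_infS_GamH. Qed.

Lemma sfsum_app l1 l2 : sfsum (l1 ++ l2) = sfadd (sfsum l1) (sfsum l2).
Proof.
  induction l1 as [|F l1 IH]; cbn [sfsum app]; [|rewrite IH];
    apply sf_ext; intros; unfold sfadd; spinor_ring.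
Qed.

Lemma sfsum_map_sfadd {A : Type} (X Y : A -> sf) l :
  sfsum (map (fun a => sfadd (X a) (Y a)) l) = sfadd (sfsum (map X l)) (sfsum (map Y l)).
Proof.
  induction l as [|a l IH]; cbn [sfsum map]; [|rewrite IH];
    apply sf_ext; intros; unfold sfadd; spinor_ring.
Qed.

Lemma GamH_word_mulRS w f F : ex_pd_inf f -> ex_pd_infS F ->
  GamH_word w (mulRS f F)
  = sfsum (map (fun p => mulRS (Gam_word (fst p) f) (GamH_word (snd p) F)) (unshuffles w)).
Proof.
  intros Hf HF; induction w as [|k w IH]; cbn [GamH_word unshuffles].
  - apply sf_ext; intros; cbn [map sfsum fst snd Gam_word GamH_word].
    unfold sfadd, mulRS; spinor_ring.
  - rewrite IH, GamH_sfsum, map_map.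
    + rewrite (map_ext _ _ (fun p => GamH_mulRS k _ _
                 (ex_pd_inf_Gam_word (fst p) f Hf) (ex_pd_infS_GamH_word (snd p) F HF))).
      rewrite sfsum_map_sfadd, map_app, sfsum_app, !map_map. reflexivity.
    + apply Forall_forall; intros G HG; apply in_map_iff in HG as [p [<- _]].
      apply ex_pd_infS_mulRS;
        [apply ex_pd_inf_Gam_word | apply ex_pd_infS_GamH_word]; assumption.
Qed.

Lemma sumR_cons a l : sumR (a :: l) = a + sumR l.
Proof. reflexivity. Qed.

Lemma sumR_nonneg l : (forall z, In z l -> 0 <= z) -> 0 <= sumR l.
Proof.
  induction l as [|z l IH]; intros H; [cbn; lra|]; rewrite sumR_cons.
  assert (0 <= z) by (apply H; now left).
  assert (0 <= sumR l) by (apply IH; intros; apply H; now right).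
  lra.
Qed.

Lemma In_le_sumR l y : (forall z, In z l -> 0 <= z) -> In y l -> y <= sumR l.
Proof.
  induction l as [|z l IH]; intros Hpos Hy; [destruct Hy|]; rewrite sumR_cons.
  assert (0 <= z) by (apply Hpos; now left).
  assert (0 <= sumR l) by (apply sumR_nonneg; intros; apply Hpos; now right).
  destruct Hy as [<-|Hy]; [lra|].
  assert (y <= sumR l) by (apply IH; [intros; apply Hpos; now right | exact Hy]).
  lra.
Qed.

Lemma sumR_map_le_length_mul {A : Type} (g : A -> R) l S :
  (forall a, In a l -> g a <= S) -> sumR (map g l) <= INR (length l) * S.
Proof.
  induction l as [|a l IH]; intros H; [cbn; lra|].
  cbn [map length]; rewrite sumR_cons, S_INR.
  assert (g a <= S) by (apply H; now left).
  assert (sumR (map g l) <= INR (length l) * S) by (apply IH; intros; apply H; now right).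
  lra.
Qed.

(** * Norm estimates *)

(* [spnorm], [spadd] and [spscale] are definitionally the norm, sum and scaling
   of Coquelicot's product normed module C * C. *)
Definition spinor_NormedModule : NormedModule C_AbsRing :=
  prod_NormedModule C_AbsRing C_NormedModule C_NormedModule.

Lemma spnorm_spadd u v : spnorm (spadd u v) <= spnorm u + spnorm v.
Proof. exact (@norm_triangle _ spinor_NormedModule u v). Qed.

Lemma spnorm_spscale_RtoC a u : spnorm (spscale (RtoC a) u) <= Rabs a * spnorm u.
Proof. rewrite <- Cmod_R. exact (@norm_scal _ spinor_NormedModule (RtoC a) u). Qed.

Lemma spnorm_szero : spnorm szero = 0.
Proof. exact (@norm_zero _ spinor_NormedModule). Qed.

Lemma minusP_spadd x1 x2 u v :
  minusP x1 x2 (spadd u v) = spadd (minusP x1 x2 u) (minusP x1 x2 v).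
Proof. unfold minusP; spinor_ring. Qed.

Lemma minusP_spscale x1 x2 z u :
  minusP x1 x2 (spscale z u) = spscale z (minusP x1 x2 u).
Proof. unfold minusP; spinor_ring. Qed.

Lemma minusP_szero x1 x2 : minusP x1 x2 szero = szero.
Proof. unfold minusP; spinor_ring. Qed.

Lemma spnorm_minusP_sfsum x1 x2 t l :
  spnorm (minusP x1 x2 (sfsum l t x1 x2))
  <= sumR (map (fun F => spnorm (minusP x1 x2 (F t x1 x2))) l).
Proof.
  induction l as [|F l IH]; cbn [sfsum map].
  - rewrite minusP_szero, spnorm_szero; cbn; lra.
  - unfold sfadd at 1; rewrite minusP_spadd, sumR_cons.
    eapply Rle_trans; [apply spnorm_spadd | lra].
Qed.

Lemma spnorm_minusP_GamH_word_mulRS w f F t x1 x2 : ex_pd_inf f -> ex_pd_infS F ->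
  spnorm (minusP x1 x2 (GamH_word w (mulRS f F) t x1 x2))
  <= sumR (map (fun p => Rabs (Gam_word (fst p) f t x1 x2)
                         * spnorm (minusP x1 x2 (GamH_word (snd p) F t x1 x2)))
               (unshuffles w)).
Proof.
  intros Hf HF. rewrite GamH_word_mulRS by assumption.
  eapply Rle_trans; [apply spnorm_minusP_sfsum|]. rewrite map_map.
  induction (unshuffles w) as [|p ps IH]; [cbn; lra|].
  cbn [map]; rewrite !sumR_cons; apply Rplus_le_compat; [|exact IH].
  unfold mulRS; rewrite minusP_spscale; apply spnorm_spscale_RtoC.
Qed.

(** * Counting the terms *)

Definition word_of_mi (I : mi) : list vf :=
  let '(i1, i2, i3, i4, i5, i6) := I in
  repeat Vt i1 ++ repeat V1 i2 ++ repeat V2 i3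
  ++ repeat VOm i4 ++ repeat VL1 i5 ++ repeat VL2 i6.

Lemma length_word_of_mi I : length (word_of_mi I) = mi_size I.
Proof.
  destruct I as [[[[[i1 i2] i3] i4] i5] i6]; cbn [word_of_mi mi_size].
  rewrite !length_app, !repeat_length; lia.
Qed.

Lemma Gam_word_app w1 w2 f : Gam_word (w1 ++ w2) f = Gam_word w1 (Gam_word w2 f).
Proof. induction w1; cbn [app Gam_word]; congruence. Qed.

Lemma GamH_word_app w1 w2 F : GamH_word (w1 ++ w2) F = GamH_word w1 (GamH_word w2 F).
Proof. induction w1; cbn [app GamH_word]; congruence. Qed.

Lemma Gam_word_repeat k n f : Gam_word (repeat k n) f = Nat.iter n (Gam k) f.
Proof. induction n; simpl; congruence. Qed.

Lemma GamH_word_repeat k n F : GamH_word (repeat k n) F = Nat.iter n (GamH k) F.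
Proof. induction n; simpl; congruence. Qed.

Lemma GammaI_Gam_word I f : GammaI I f = Gam_word (word_of_mi I) f.
Proof.
  destruct I as [[[[[i1 i2] i3] i4] i5] i6]; cbn [GammaI word_of_mi].
  now rewrite !Gam_word_app, !Gam_word_repeat.
Qed.

Lemma GammaHI_GamH_word I F : GammaHI I F = GamH_word (word_of_mi I) F.
Proof.
  destruct I as [[[[[i1 i2] i3] i4] i5] i6]; cbn [GammaHI word_of_mi].
  now rewrite !GamH_word_app, !GamH_word_repeat.
Qed.

Lemma length_unshuffles w : length (unshuffles w) = (2 ^ length w)%nat.
Proof.
  induction w as [|k w IH]; cbn [unshuffles length]; [reflexivity|].
  rewrite length_app, !length_map, IH; cbn [Nat.pow]; lia.
Qed.

Lemma In_unshuffles_app w1 w2 p : In p (unshuffles (w1 ++ w2)) ->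
  exists p1 p2, In p1 (unshuffles w1) /\ In p2 (unshuffles w2) /\
    p = (fst p1 ++ fst p2, snd p1 ++ snd p2).
Proof.
  revert p; induction w1 as [|k w1 IH]; intros p Hp; cbn [app unshuffles] in *.
  - exists ([], []), p; destruct p; cbn; auto.
  - apply in_app_or in Hp as [Hp|Hp]; apply in_map_iff in Hp as [q [<- Hq]];
      destruct (IH q Hq) as (p1 & p2 & H1 & H2 & ->).
    + exists (k :: fst p1, snd p1), p2; repeat split; auto.
      apply in_or_app; left; apply in_map_iff; exists p1; auto.
    + exists (fst p1, k :: snd p1), p2; repeat split; auto.
      apply in_or_app; right; apply in_map_iff; exists p1; auto.
Qed.

Lemma In_unshuffles_repeat k n p : In p (unshuffles (repeat k n)) ->
  exists i j, (i + j = n)%nat /\ p = (repeat k i, repeat k j).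
Proof.
  revert p; induction n as [|n IH]; intros p Hp; cbn [repeat unshuffles] in *.
  - destruct Hp as [<-|[]]; exists 0%nat, 0%nat; auto.
  - apply in_app_or in Hp as [Hp|Hp]; apply in_map_iff in Hp as [q [<- Hq]];
      destruct (IH q Hq) as (i & j & Hij & ->); cbn [fst snd].
    + exists (S i), j; split; [lia | reflexivity].
    + exists i, (S j); split; [lia | reflexivity].
Qed.

(* Unshuffling keeps the order of the letters, so both halves of an ordered
   word are ordered. *)
Lemma In_unshuffles_word_of_mi I p : In p (unshuffles (word_of_mi I)) ->
  exists J J', p = (word_of_mi J, word_of_mi J') /\ (mi_size J + mi_size J' = mi_size I)%nat.
Proof.
  destruct I as [[[[[i1 i2] i3] i4] i5] i6]; cbn [word_of_mi]; intros Hp.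
  apply In_unshuffles_app in Hp as (q1 & r1 & H1 & Hr1 & ->).
  apply In_unshuffles_app in Hr1 as (q2 & r2 & H2 & Hr2 & ->).
  apply In_unshuffles_app in Hr2 as (q3 & r3 & H3 & Hr3 & ->).
  apply In_unshuffles_app in Hr3 as (q4 & r4 & H4 & Hr4 & ->).
  apply In_unshuffles_app in Hr4 as (q5 & q6 & H5 & H6 & ->).
  apply In_unshuffles_repeat in H1 as (a1 & b1 & E1 & ->).
  apply In_unshuffles_repeat in H2 as (a2 & b2 & E2 & ->).
  apply In_unshuffles_repeat in H3 as (a3 & b3 & E3 & ->).
  apply In_unshuffles_repeat in H4 as (a4 & b4 & E4 & ->).
  apply In_unshuffles_repeat in H5 as (a5 & b5 & E5 & ->).
  apply In_unshuffles_repeat in H6 as (a6 & b6 & E6 & ->).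
  exists (a1, a2, a3, a4, a5, a6), (b1, b2, b3, b4, b5, b6); cbn; split; [reflexivity | lia].
Qed.

Lemma In_mis_upto J n : (mi_size J <= n)%nat -> In J (mis_upto n).
Proof.
  destruct J as [[[[[a b] c] d] e] f]; unfold mis_upto, mi_size; intros H.
  apply filter_In; split; [|apply Nat.leb_le; exact H].
  assert (Hs : forall x, (x <= n)%nat -> In x (seq 0 (S n))) by (intros; apply in_seq; lia).
  apply in_flat_map; exists a; split; [apply Hs; lia|].
  apply in_flat_map; exists b; split; [apply Hs; lia|].
  apply in_flat_map; exists c; split; [apply Hs; lia|].
  apply in_flat_map; exists d; split; [apply Hs; lia|].
  apply in_flat_map; exists e; split; [apply Hs; lia|].
  apply in_map_iff; exists f; split; [reflexivity | apply Hs; lia].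
Qed.

Lemma In_pairs_upto J J' n : (mi_size J + mi_size J' <= n)%nat -> In (J, J') (pairs_upto n).
Proof.
  intros H; unfold pairs_upto; apply filter_In; split.
  - apply in_prod; apply In_mis_upto; lia.
  - apply Nat.leb_le; exact H.
Qed.

Theorem lemma2p3 :
  forall n : nat, exists K : R, 0 <= K /\
    forall (I : mi), mi_size I = n ->
    forall (f1 : fn) (f2 : sf), smooth f1 -> smoothS f2 ->
    forall t x1 x2 : R, (x1 <> 0 \/ x2 <> 0) ->
      spnorm (minusP x1 x2 (GammaHI I (mulRS f1 f2) t x1 x2))
      <= K * sumR (map (fun p : mi * mi =>
                 Rabs (GammaI (fst p) f1 t x1 x2)
                 * spnorm (minusP x1 x2 (GammaHI (snd p) f2 t x1 x2)))
               (pairs_upto n)).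
Proof.
  intros n; exists (INR (2 ^ n)); split; [apply pos_INR|].
  (* The hypothesis x <> 0 is not needed: at x = 0 the coefficients x_a / r of
     [minusP] are junk values, but [minusP] is still linear. *)
  intros I HI f1 f2 Hf1 Hf2 t x1 x2 _.
  rewrite GammaHI_GamH_word.
  eapply Rle_trans.
  { apply spnorm_minusP_GamH_word_mulRS;
      [apply smooth_ex_pd_inf | apply smoothS_ex_pd_infS]; assumption. }
  replace (2 ^ n)%nat with (length (unshuffles (word_of_mi I)))
    by now rewrite length_unshuffles, length_word_of_mi, HI.
  apply sumR_map_le_length_mul; intros p Hp.
  destruct (In_unshuffles_word_of_mi I p Hp) as (J & J' & -> & HJ); cbn [fst snd].
  rewrite <- GammaI_Gam_word, <- GammaHI_GamH_word.
  apply In_le_sumR.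
  - intros y Hy; apply in_map_iff in Hy as [q [<- _]].
    apply Rmult_le_pos; [apply Rabs_pos | apply sqrt_pos].
  - apply in_map_iff; exists (J, J'); split; [reflexivity | apply In_pairs_upto; lia].
Qed.
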